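(* Let $m,d\ge1$ be integers, let $\preceq$ be the dominance order on $[m]^d$, and for $x\in[0,m-1]^d$ let $V(x)=\prod_{i=1}^d(x_i+1)$. For $u\preceq w$ set $\hat y_{uw}=1/V(w-u)$, and for $u\preceq v\preceq w$ set $$\hat y'_{uvw}=\hat y_{uw}\frac{V(v-u)}{V(v-u)+V(w-v)},\qquad \hat y''_{uvw}=\hat y_{uw}\frac{V(w-v)}{V(v-u)+V(w-v)}.$$ Then for all $u,v\in[m]^d$ with $u\preceq v$, $$\sum_{w\in[m]^d:\ v\preceq w}\hat y'_{uvw}+\sum_{w\in[m]^d:\ w\preceq u}\hat y''_{wuv}\le (4\pi)^d.$$
   Context: The dominance order: $x\preceq y$ iff $x_i\le y_i$ for all $i\in[d]$. *)

From HB Require Import structures.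
From mathcomp Require Import all_boot all_order all_algebra.
From mathcomp Require Import reals trigo.
Set Implicit Arguments. Unset Strict Implicit. Unset Printing Implicit Defensive.
Import Order.TTheory GRing.Theory Num.Theory.
Local Open Scope ring_scope.

(* Points of [m]^d, with [m] represented by 'I_m = {0,...,m-1}
   (a shift of {1,...,m}; only coordinate differences matter). *)
Definition pt (m d : nat) := {ffun 'I_d -> 'I_m}.

Definition dom (m d : nat) (x y : pt m d) : bool := [forall i, (x i <= y i)%N].

Definition Vol (R : realType) (m d : nat) (u w : pt m d) : R :=
  \prod_(i < d) ((w i - u i)%N.+1)%:R.

Definition yhat (R : realType) (m d : nat) (u w : pt m d) : R := 1 / Vol R u w.

Definition y1 (R : realType) (m d : nat) (u v w : pt m d) : R :=
  yhat R u w * (Vol R u v / (Vol R u v + Vol R v w)).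

Definition y2 (R : realType) (m d : nat) (u v w : pt m d) : R :=
  yhat R u w * (Vol R v w / (Vol R u v + Vol R v w)).

(* By AM-GM, V(v-u) / (V(v-u) + V(w-v)) <= sqrt V(v-u) / (2 sqrt V(w-v)), so
   y'_uvw <= 1/2 prod_i phi(a_i, b_i) with a = v - u, b = w - v and
   phi(a, b) = sqrt(a+1) / (sqrt(b+1) (a+b+1)); likewise y''_wuv with b = u - w.
   The sum over w of these products factors into a product of one-dimensional
   sums, and sum_b phi(a, b) <= 4: phi(a, .) is dominated by the increments of
   2 sqrt b / sqrt(a+1) up to b = a+1 and of 4 - 2 sqrt(a+1) / sqrt b beyond,
   thanks to 1 / sqrt(k+1) <= 2 (sqrt(k+1) - sqrt k).  Each of the two sums is
   thus at most 4^d / 2. *)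

From HB Require Import structures.
From mathcomp Require Import all_boot all_order all_algebra.
From mathcomp Require Import reals trigo.
From mathcomp Require Import ring lra zify.
Import Order.TTheory GRing.Theory Num.Theory.
Local Open Scope ring_scope.

Lemma sqr_div_sqrD_le (R : realFieldType) (x y : R) : 0 <= x -> 0 < y ->
  x ^+ 2 / (x ^+ 2 + y ^+ 2) <= x / (2 * y).
Proof.
move=> x_ge0 y_gt0.
have xy_gt0 : 0 < x ^+ 2 + y ^+ 2 by rewrite ltr_wpDl ?sqr_ge0 ?exprn_gt0.
rewrite ler_pdivrMr // mulrAC ler_pdivlMr ?mulr_gt0 //.
have := sqr_ge0 (x - y); nra.
Qed.

Lemma sum_family_prod_le (R : numDomainType) (I J : finType) (P : I -> pred J)
    (F : I -> J -> R) (B : R) :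
  (forall i j, P i j -> 0 <= F i j) -> (forall i, \sum_(j | P i j) F i j <= B) ->
  \sum_(f : {ffun I -> J} | [forall i, P i (f i)]) \prod_i F i (f i) <= B ^+ #|I|.
Proof.
move=> F_ge0 sumF_le; rewrite -prodr_const -bigA_distr_big_dep.
by apply: ler_prod => i _; rewrite sumr_ge0 ?sumF_le // => j; exact: F_ge0.
Qed.

Section OneDimensional.
Variable R : rcfType.
Local Notation sqrtn n := (Num.sqrt (n%:R : R)).

Definition phi (a b : nat) : R := sqrtn a.+1 / (sqrtn b.+1 * (a + b).+1%:R).

Definition phi_primitive (a b : nat) : R :=
  if (b <= a.+1)%N then 2 * sqrtn b / sqrtn a.+1 else 4 - 2 * sqrtn a.+1 / sqrtn b.

Lemma sqrtn_gt0 n : (0 < n)%N -> 0 < sqrtn n.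
Proof. by move=> n_gt0; rewrite sqrtr_gt0 ltr0n. Qed.

Lemma sqrtn_le [n k : nat] : (n <= k)%N -> sqrtn n <= sqrtn k.
Proof. by move=> le_nk; rewrite ler_sqrt ?ler_nat. Qed.

Lemma sqrtn_increment_ge k : 1 <= 2 * sqrtn k.+1 * (sqrtn k.+1 - sqrtn k).
Proof.
have sq1 : sqrtn k.+1 ^+ 2 = k%:R + 1 by rewrite sqr_sqrtr // -natr1.
have sq0 : sqrtn k ^+ 2 = k%:R by rewrite sqr_sqrtr.
have := sqrtr_ge0 (k.+1%:R : R); have := sqrtr_ge0 (k%:R : R).
nra.
Qed.

Lemma phi_ge0 a b : 0 <= phi a b.
Proof. by rewrite /phi divr_ge0 ?mulr_ge0 ?sqrtr_ge0. Qed.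

Lemma phi_primitive0 a : phi_primitive a 0 = 0.
Proof. by rewrite /phi_primitive sqrtr0 mulr0 mul0r. Qed.

Lemma phi_primitive_le4 a b : phi_primitive a b <= 4.
Proof.
have sa_gt0 : 0 < sqrtn a.+1 by exact: sqrtn_gt0.
rewrite /phi_primitive; case: leqP => [le_ba|_].
  rewrite ler_pdivrMr // -subr_ge0.
  have := sqrtn_le le_ba; lra.
by rewrite lerBlDr lerDl divr_ge0 ?mulr_ge0 ?sqrtr_ge0.
Qed.

Lemma phi_primitive_tail [a b : nat] : (a.+1 <= b)%N ->
  phi_primitive a b = 4 - 2 * sqrtn a.+1 / sqrtn b.
Proof.
rewrite /phi_primitive leq_eqVlt => /orP[/eqP<-|lt_ab]; last by rewrite leqNgt lt_ab.
have sa_gt0 : 0 < sqrtn a.+1 by exact: sqrtn_gt0.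
by rewrite leqnn -mulrA divff ?gt_eqF //; lra.
Qed.

Lemma phi_le_increment a b : phi a b <= phi_primitive a b.+1 - phi_primitive a b.
Proof.
have sa_gt0 : 0 < sqrtn a.+1 by exact: sqrtn_gt0.
have sb1_gt0 : 0 < sqrtn b.+1 by exact: sqrtn_gt0.
have incr := sqrtn_increment_ge b.
have c_gt0 : 0 < (a + b).+1%:R :> R by rewrite ltr0n.
case: (leqP b a) => [le_ba|lt_ab].
  have -> : phi_primitive a b.+1 - phi_primitive a b
      = 2 * (sqrtn b.+1 - sqrtn b) / sqrtn a.+1.
    by rewrite /phi_primitive ltnS le_ba leqW //; field; rewrite gt_eqF.
  have sa2 : sqrtn a.+1 ^+ 2 <= (a + b).+1%:R.
    by rewrite sqr_sqrtr // ler_nat ltnS leq_addr.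
  rewrite /phi ler_pdivrMr ?mulr_gt0 // mulrAC ler_pdivlMr //.
  nra.
have sb_gt0 : 0 < sqrtn b by apply: sqrtn_gt0; apply: leq_trans lt_ab.
have -> : phi_primitive a b.+1 - phi_primitive a b
    = 2 * sqrtn a.+1 * (sqrtn b.+1 - sqrtn b) / (sqrtn b * sqrtn b.+1).
  rewrite (phi_primitive_tail (leqW lt_ab)) (phi_primitive_tail lt_ab).
  field; rewrite !gt_eqF //.
have sb2 : sqrtn b.+1 ^+ 2 <= (a + b).+1%:R.
  by rewrite sqr_sqrtr // ler_nat ltnS leq_addl.
have le_sb := sqrtn_le (leqnSn b).
rewrite /phi ler_pdivrMr ?mulr_gt0 // mulrAC ler_pdivlMr ?mulr_gt0 //.
have rt_le_c : sqrtn b * sqrtn b.+1 <= (a + b).+1%:R by nra.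
rewrite (mulrC 2 (sqrtn a.+1)) -!mulrA ler_pM2l //.
nra.
Qed.

Lemma sum_phi_le4 a n : \sum_(b < n) phi a b <= 4.
Proof.
apply: le_trans (_ : \sum_(b < n) (phi_primitive a b.+1 - phi_primitive a b) <= 4).
  by apply: ler_sum => b _; exact: phi_le_increment.
rewrite -(big_mkord xpredT (fun b => _ b.+1 - _ b)) telescope_sumr //.
by rewrite phi_primitive0 subr0 phi_primitive_le4.
Qed.

Lemma sum_phi_shift_le4 a c n : \sum_(j < n | (c <= j)%N) phi a (j - c) <= 4.
Proof.
have -> : \sum_(j < n | (c <= j)%N) phi a (j - c) = \sum_(c <= j < n) phi a (j - c).
  by rewrite big_geq_mkord.
rewrite -{1}[c]add0n big_addn big_mkord.
under eq_bigr do rewrite addnK.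
exact: sum_phi_le4.
Qed.

Lemma sum_phi_rev_le4 a c n : (c < n)%N ->
  \sum_(j < n | (j <= c)%N) phi a (c - j) <= 4.
Proof.
move=> lt_cn.
have -> : \sum_(j < n | (j <= c)%N) phi a (c - j) = \sum_(0 <= j < c.+1) phi a (c - j).
  by rewrite (big_nat_widen _ _ _ _ _ lt_cn) big_mkord.
rewrite big_nat_rev add0n big_mkord (eq_bigr (fun j : 'I_c.+1 => phi a j)).
  exact: sum_phi_le4.
by move=> j _; rewrite subSS subKn // -ltnS.
Qed.

Lemma vol_ratio_le_prod_phi (I : finType) (al be : I -> nat) :
  1 / \prod_i (al i + be i).+1%:R *
    (\prod_i (al i).+1%:R / (\prod_i (al i).+1%:R + \prod_i (be i).+1%:R))
  <= 1 / 2 * \prod_i phi (al i) (be i).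
Proof.
have prod_sqr (c : I -> nat) : \prod_i (c i).+1%:R = (\prod_i sqrtn (c i).+1) ^+ 2.
  by rewrite -prodrXl; apply: eq_bigr => i _; rewrite sqr_sqrtr.
have prod_gt0 (c : I -> nat) : 0 < \prod_i sqrtn (c i).+1.
  by apply: prodr_gt0 => i _; exact: sqrtn_gt0.
have vol_gt0 : 0 < \prod_i (al i + be i).+1%:R :> R.
  by apply: prodr_gt0 => i _; rewrite ltr0n.
rewrite /phi prodf_div big_split /= (prod_sqr al) (prod_sqr be).
have X_gt0 := prod_gt0 al; have Y_gt0 := prod_gt0 be.
set X := \prod_i _ in X_gt0 *; set Y := \prod_i _ in Y_gt0 *.
set C := \prod_i _ in vol_gt0 *.
have -> : 1 / 2 * (X / (Y * C)) = 1 / C * (X / (2 * Y)).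
  by field; rewrite !gt_eqF.
apply: ler_wpM2l; first by rewrite div1r invr_ge0 ltW.
by apply: sqr_div_sqrD_le; rewrite ?ltW.
Qed.

End OneDimensional.

Section Dominance.
Variables (R : realType) (m d : nat).

Lemma Vol_dom_split [u v w : pt m d] : dom u v -> dom v w ->
  Vol R u w = \prod_i ((v i - u i) + (w i - v i)).+1%:R.
Proof.
move=> /forallP le_uv /forallP le_vw; apply: eq_bigr => i _.
have split_uw : (w i - u i = v i - u i + (w i - v i))%N.
  by have := le_uv i; have := le_vw i; lia.
by rewrite split_uw.
Qed.

Lemma y1_le_prod_phi [u v w : pt m d] : dom u v -> dom v w ->
  y1 R u v w <= 1 / 2 * \prod_i phi R (v i - u i) (w i - v i).
Proof.
by move=> le_uv le_vw; rewrite /y1 /yhat (Vol_dom_split le_uv le_vw) vol_ratio_le_prod_phi.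
Qed.

Lemma y2_le_prod_phi [w u v : pt m d] : dom w u -> dom u v ->
  y2 R w u v <= 1 / 2 * \prod_i phi R (v i - u i) (u i - w i).
Proof.
move=> le_wu le_uv; rewrite /y2 /yhat (Vol_dom_split le_wu le_uv) [Vol R w u + _]addrC.
under eq_bigr do rewrite addnC.
exact: vol_ratio_le_prod_phi.
Qed.

Lemma sum_y1_le (u v : pt m d) : dom u v ->
  \sum_(w : pt m d | dom v w) y1 R u v w <= 4 ^+ d / 2.
Proof.
move=> le_uv.
apply: le_trans (ler_sum _ (fun w => y1_le_prod_phi le_uv)) _.
rewrite -mulr_sumr div1r mulrC ler_pM2r ?invr_gt0 //.
have := @sum_family_prod_le R ('I_d) ('I_m) (fun i j => (v i <= j)%N)
  (fun i j => phi R (v i - u i) (j - v i)) 4.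
rewrite card_ord; apply=> [i j _|i]; first exact: phi_ge0.
exact: sum_phi_shift_le4.
Qed.

Lemma sum_y2_le (u v : pt m d) : dom u v ->
  \sum_(w : pt m d | dom w u) y2 R w u v <= 4 ^+ d / 2.
Proof.
move=> le_uv.
apply: le_trans (ler_sum _ (fun w le_wu => y2_le_prod_phi le_wu le_uv)) _.
rewrite -mulr_sumr div1r mulrC ler_pM2r ?invr_gt0 //.
have := @sum_family_prod_le R ('I_d) ('I_m) (fun i j => (j <= u i)%N)
  (fun i j => phi R (v i - u i) (u i - j)) 4.
rewrite card_ord; apply=> [i j _|i]; first exact: phi_ge0.
exact: sum_phi_rev_le4.
Qed.

End Dominance.

Theorem lemma3 (R : realType) (m d : nat) (hm : (1 <= m)%N) (hd : (1 <= d)%N)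
  (u v : pt m d) (huv : dom u v) :
  \sum_(w : pt m d | dom v w) y1 R u v w
  + \sum_(w : pt m d | dom w u) y2 R w u v
  <= (4 * pi) ^+ d.
Proof.
apply: le_trans (lerD (@sum_y1_le R m d u v huv) (@sum_y2_le R m d u v huv)) _.
rewrite -splitr exprMn ler_peMr ?exprn_ge0 //.
by apply: exprn_ege1; have := pi_ge2 R; lra.
Qed.
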